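(* Run the mechanism BFM-VM described in the context with arbitrary $B>0$, $\alpha>1$, $\ell\in\{1,2\}$, with all sellers behaving truthfully. Then $$\sum_{i=1}^{\ell}\sum_{t=1}^{M}v(S_{i,t})\ \le\ \frac{4\alpha-2}{\alpha-1}\,v(S^* ).$$
   Context: Setting. $\mathcal{N}$ is a finite set of $n$ sellers. The valuation $v:2^{\mathcal{N}}\to\mathbb{R}_{\ge 0}$ satisfies $v(\emptyset)=0$ and is submodular (for $X\subseteq Y\subseteq\mathcal{N}$ and $u\notin Y$, $v(u\mid Y)\le v(u\mid X)$), not necessarily monotone, where $v(S\mid T)=v(S\cup T)-v(T)$, $v(u\mid T)=v(\{u\}\mid T)$, $v(u)=v(\{u\})$. Each seller $u$ has a private cost $c(u)\ge 0$. $B>0$ is the budget, $[\ell]=\{1,\dots,\ell\}$. Sellers behave truthfully: a seller $u$ offered price $q$ accepts iff $c(u)\le q$. Mechanism BFM-VM (inputs $B$, $\alpha>1$, $\ell\in\{1,2\}$): 1. Offer every seller the price $B$; let $R$ be the set of sellers who accept, and set $p(u)=B$ for $u\in R$. 2. Set $t=1$, $\rho_1=\max_{u\in R}v(u)$, $S_{1,1}=\{u_0\}$ for some $u_0\in\arg\max_{u\in R}v(u)$, and (if $\ell=2$) $S_{2,1}=\emptyset$. 3. Repeat rounds: set $t\leftarrow t+1$, $\rho_t=\alpha\rho_{t-1}$, $S_{i,t}=\emptyset$ for $i\in[\ell]$. Process the sellers $u\in R\setminus\bigcup_{i=1}^{\ell}S_{i,t-1}$ one at a time in a fixed order. For each such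 $u$: pick $j\in\arg\max_{i\in[\ell]}v(u\mid S_{i,t})$ (current contents); update $p(u)\leftarrow\min\{p(u),\ v(u\mid S_{j,t})/(\rho_t/B)\}$ and offer $p(u)$ to $u$. If $u$ accepts: if $v(S_{j,t}\cup\{u\})>\rho_t$, end the round immediately; otherwise add $u$ to $S_{j,t}$. If $u$ rejects, remove $u$ from $R$. After the round, stop if $R\setminus\bigcup_{i=1}^{\ell}(S_{i,t-1}\cup S_{i,t})=\emptyset$; otherwise start another round. 4. Let $M$ be the final value of $t$. Output $S^*\in\arg\max_{A\in\{S_{i,t}: i\in[\ell],\ t\in\{M-1,M\}\}}v(A)$, paying each $u\in S^*$ its current price $p(u)$. Notation: $S_{i,t}$ denotes the contents of that candidate set at the end of round $t$. *)

From HB Require Import structures.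
From mathcomp Require Import all_boot all_order all_algebra.
Set Implicit Arguments. Unset Strict Implicit. Unset Printing Implicit Defensive.
Import Order.TTheory GRing.Theory Num.Theory.
Local Open Scope ring_scope.

Section Defs.
Variables (T : finType) (F : realFieldType).

Definition marg (v : {set T} -> F) (u : T) (S : {set T}) : F := v (u |: S) - v S.

Definition submodular (v : {set T} -> F) : Prop :=
  forall (X Y : {set T}) (u : T), X \subset Y -> u \notin Y -> marg v u Y <= marg v u X.

Definition upd (p : T -> F) (u : T) (q : F) : T -> F :=
  fun w => if w == u then q else p w.

Definition updS (S : nat -> {set T}) (j : nat) (A : {set T}) : nat -> {set T} :=
  fun i => if i == j then A else S i.

Definition newprice (p : T -> F) (u : T) (m rho B : F) : F :=
  Num.min (p u) (m / (rho / B)).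

(* One round of step 3 of BFM-VM with threshold rho.
   round_run ell v c B rho us Rs p S Rs' p' S' :
   processing the list us of sellers, starting from the set R = Rs, the prices p
   and the current contents S of the candidate sets S_{0..ell-1} of the round,
   the round may end with R = Rs', prices p', candidate sets S'.
   The choice of j (argmax, any tie-breaking) is nondeterministic. Sellers are
   truthful: u accepts the offer q iff c u <= q. *)
Inductive round_run (ell : nat) (v : {set T} -> F) (c : T -> F) (B rho : F) :
  seq T -> {set T} -> (T -> F) -> (nat -> {set T}) ->
  {set T} -> (T -> F) -> (nat -> {set T}) -> Prop :=
| RR_nil Rs p S : round_run ell v c B rho [::] Rs p S Rs p S
| RR_reject u us Rs p S j Rs' p' S' :
    (j < ell)%N ->
    (forall i, (i < ell)%N -> marg v u (S i) <= marg v u (S j)) ->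
    ~~ (c u <= newprice p u (marg v u (S j)) rho B) ->
    round_run ell v c B rho us (Rs :\ u) (upd p u (newprice p u (marg v u (S j)) rho B)) S
      Rs' p' S' ->
    round_run ell v c B rho (u :: us) Rs p S Rs' p' S'
| RR_stop u us Rs p S j :
    (j < ell)%N ->
    (forall i, (i < ell)%N -> marg v u (S i) <= marg v u (S j)) ->
    c u <= newprice p u (marg v u (S j)) rho B ->
    rho < v (u |: S j) ->
    round_run ell v c B rho (u :: us) Rs p S
      Rs (upd p u (newprice p u (marg v u (S j)) rho B)) S
| RR_add u us Rs p S j Rs' p' S' :
    (j < ell)%N ->
    (forall i, (i < ell)%N -> marg v u (S i) <= marg v u (S j)) ->
    c u <= newprice p u (marg v u (S j)) rho B ->
    v (u |: S j) <= rho ->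
    round_run ell v c B rho us Rs (upd p u (newprice p u (marg v u (S j)) rho B))
      (updS S j (u |: S j)) Rs' p' S' ->
    round_run ell v c B rho (u :: us) Rs p S Rs' p' S'.

(* A complete (terminating) run of BFM-VM with inputs B, alpha, ell, sellers
   processed in the fixed order ord.  Indices: candidate set i in [0, ell)
   (paper's i+1), rounds t = 1..M.  S i t is S_{i+1,t} at the end of round t,
   Rs t and p t are R and the prices at the end of round t,
   rho_t = rho_1 * alpha^(t-1) with rho_1 = v({u0}).  Sstar is the output. *)
Definition BFM_VM_run (ord : seq T) (v : {set T} -> F) (c : T -> F) (B alpha : F)
  (ell : nat) (M : nat) (S : nat -> nat -> {set T}) (Sstar : {set T}) : Prop :=
  exists (Rs : nat -> {set T}) (p : nat -> T -> F) (u0 : T),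
  (Rs 1%N = [set u | c u <= B] /\ p 1%N = (fun _ => B)) /\
      (u0 \in Rs 1%N /\ (forall u, u \in Rs 1%N -> v [set u] <= v [set u0])) /\
      (S 0%N 1%N = [set u0] /\ (forall i, (0 < i < ell)%N -> S i 1%N = set0)) /\
      ((2 <= M)%N /\
      (forall t, (2 <= t <= M)%N ->
         round_run ell v c B (v [set u0] * alpha ^+ t.-1)
           [seq u <- ord | (u \in Rs t.-1) && (u \notin \bigcup_(i < ell) S i t.-1)]
           (Rs t.-1) (p t.-1) (fun _ => set0) (Rs t) (p t) (fun i => S i t))) /\
      ((forall t, (2 <= t < M)%N ->
         Rs t :\: \bigcup_(i < ell) (S i t.-1 :|: S i t) != set0) /\
      Rs M :\: \bigcup_(i < ell) (S i M.-1 :|: S i M) = set0) /\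
      ((exists2 i, (i < ell)%N & (Sstar = S i M.-1 \/ Sstar = S i M)) /\
      (forall i, (i < ell)%N -> v (S i M.-1) <= v Sstar /\ v (S i M) <= v Sstar)).

End Defs.

(* For t <= M - 2 every candidate set stays below its round's threshold,
   v(S_{i,t}) <= rho_t = rho_1 alpha^(t-1), and the sets of the last two rounds
   are bounded by v(S^* ). Round M - 1 was not the last one, so some seller
   survived it without being placed; this is only possible if that round ended
   on an overflow, rho_{M-1} < v(S_{j,M-1} + w) <= v(S^* ) + rho_1, using
   submodularity and the choice of rho_1 as the largest singleton value. The
   geometric sum of the early thresholds is then (rho_{M-1} - rho_1)/(alpha - 1)
   <= v(S^* )/(alpha - 1), and with ell <= 2 the total is at most
   (4 + 2/(alpha - 1)) v(S^* ). *)

From HB Require Import structures.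
From mathcomp Require Import all_boot all_order all_algebra.
From mathcomp Require Import ring lra zify.

Set Implicit Arguments.
Unset Strict Implicit.
Unset Printing Implicit Defensive.

Import Order.TTheory GRing.Theory Num.Theory.
Local Open Scope ring_scope.

Section Round.
Variables (T : finType) (F : realFieldType).
Variables (ell : nat) (v : {set T} -> F) (c : T -> F) (B rho : F).

Lemma round_run_subR {us Rs p S Rs' p' S'} :
  round_run ell v c B rho us Rs p S Rs' p' S' -> Rs' \subset Rs.
Proof.
elim=> {us Rs p S Rs' p' S'} // u us Rs p S j Rs' p' S' _ _ _ _ sR.
exact: subset_trans sR (subsetDl _ _).
Qed.

Lemma round_run_subS {us Rs p S Rs' p' S'} :
  round_run ell v c B rho us Rs p S Rs' p' S' -> forall i, S i \subset S' i.
Proof.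
elim=> {us Rs p S Rs' p' S'} // u us Rs p S j Rs' p' S' _ _ _ _ _ sS i.
apply: subset_trans (sS i); rewrite /updS; case: eqP => // ->; exact: subsetUr.
Qed.

Lemma round_run_le {us Rs p S Rs' p' S'} :
  round_run ell v c B rho us Rs p S Rs' p' S' ->
  (forall i, v (S i) <= rho) -> forall i, v (S' i) <= rho.
Proof.
elim=> {us Rs p S Rs' p' S'} // u us Rs p S j Rs' p' S' _ _ _ le_rho _ IH le_S.
by apply: IH => i; rewrite /updS; case: eqP.
Qed.

Lemma round_run_overflow {us Rs p S Rs' p' S' x} :
  round_run ell v c B rho us Rs p S Rs' p' S' ->
  x \in us -> x \in Rs' -> (forall i, (i < ell)%N -> x \notin S' i) ->
  exists w j, [/\ w \in us, (j < ell)%N & rho < v (w |: S' j)].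
Proof.
elim=> {us Rs p S Rs' p' S'}; first by [].
- move=> u us Rs p S j Rs' p' S' _ _ _ run IH.
  rewrite inE => /predU1P[-> uR' _|xus xR' xS].
    by have := subsetP (round_run_subR run) u uR'; rewrite !inE eqxx.
  by have [w [k [wus kl lt]]] := IH xus xR' xS; exists w, k; rewrite inE wus orbT.
- by move=> u us Rs p S j jl _ _ lt _ _ _; exists u, j; rewrite inE eqxx.
- move=> u us Rs p S j Rs' p' S' jl _ _ _ run IH.
  rewrite inE => /predU1P[-> _ uS|xus xR' xS].
    have /subsetP/(_ u) := round_run_subS run j.
    by rewrite /updS eqxx !inE eqxx => /(_ isT) uSj; move: (uS j jl); rewrite uSj.
  by have [w [k [wus kl lt]]] := IH xus xR' xS; exists w, k; rewrite inE wus orbT.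
Qed.

End Round.

Lemma marg_le_singleton (T : finType) (F : realFieldType) (v : {set T} -> F) u A :
  v set0 = 0 -> 0 <= v [set u] -> submodular v -> marg v u A <= v [set u].
Proof.
move=> v0 vu_ge0 sub; case: (boolP (u \in A)) => uA.
  by rewrite /marg (setUidPr _) ?sub1set // subrr.
by have := sub set0 A u (sub0set _) uA; rewrite /marg setU0 v0 subr0.
Qed.

Lemma geometric_sum (F : realFieldType) (r a : F) n :
  (a - 1) * \sum_(1 <= t < n.+1) r * a ^+ t.-1 = r * (a ^+ n - 1).
Proof.
by rewrite big_add1 /= -mulr_sumr big_mkord subrX1; ring.
Qed.

Section Run.
Variables (T : finType) (F : realFieldType).
Variables (v : {set T} -> F) (c : T -> F) (B alpha : F) (ell : nat) (ord : seq T).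
(* A run with M = m.+2 rounds. *)
Variables (m : nat) (S : nat -> nat -> {set T}) (Sstar : {set T}).
Variables (Rs : nat -> {set T}) (p : nat -> T -> F) (u0 : T).

Hypothesis v0 : v set0 = 0.
Hypothesis v_ge0 : forall A, 0 <= v A.
Hypothesis v_sub : submodular v.
Hypothesis alpha_gt1 : 1 < alpha.
Hypothesis ord_full : forall u, u \in ord.
Hypothesis u0_max : forall u, u \in Rs 1%N -> v [set u] <= v [set u0].
Hypothesis S0_1 : S 0%N 1%N = [set u0].
Hypothesis Si_1 : forall i, (0 < i < ell)%N -> S i 1%N = set0.
Hypothesis rounds : forall t, (2 <= t <= m.+2)%N ->
  round_run ell v c B (v [set u0] * alpha ^+ t.-1)
    [seq u <- ord | (u \in Rs t.-1) && (u \notin \bigcup_(i < ell) S i t.-1)]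
    (Rs t.-1) (p t.-1) (fun _ => set0) (Rs t) (p t) (fun i => S i t).
Hypothesis continued : forall t, (2 <= t < m.+2)%N ->
  Rs t :\: \bigcup_(i < ell) (S i t.-1 :|: S i t) != set0.
Hypothesis Sstar_max : forall i, (i < ell)%N ->
  v (S i m.+1) <= v Sstar /\ v (S i m.+2) <= v Sstar.

Lemma run_subR1 t : (1 <= t <= m.+2)%N -> Rs t \subset Rs 1%N.
Proof.
elim: t => [|[_ _|t IH ht]]; [by []|exact: subxx|].
by apply: subset_trans (round_run_subR (rounds (t := t.+2) ht)) (IH _); lia.
Qed.

Lemma run_le_threshold i t : (i < ell)%N -> (1 <= t <= m.+2)%N ->
  v (S i t) <= v [set u0] * alpha ^+ t.-1.
Proof.
move=> il; case: t => [|[_|t ht]] //.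
  by case: i il => [|i] il; rewrite /= expr0 mulr1 ?S0_1 ?Si_1 ?v0.
apply: (round_run_le (rounds (t := t.+2) ht)) => _; rewrite v0 mulr_ge0 //.
by rewrite exprn_ge0 // ltW // (lt_trans ltr01).
Qed.

Lemma run_penultimate_threshold : (0 < m)%N ->
  v [set u0] * alpha ^+ m - v [set u0] < v Sstar.
Proof.
move=> m_gt0; have ht : (2 <= m.+1 <= m.+2)%N by lia.
have /set0Pn[x] := continued (ltac:(lia) : (2 <= m.+1 < m.+2)%N).
rewrite inE => /andP[x_nS xR].
have x_nSi i : (i < ell)%N -> x \notin S i m /\ x \notin S i m.+1.
  move=> il; apply/andP; rewrite -negb_or -in_setU; apply: contra x_nS => xS.
  by apply/bigcupP; exists (Ordinal il).
have x_us :
    x \in [seq u <- ord | (u \in Rs m) && (u \notin \bigcup_(i < ell) S i m)].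
  rewrite mem_filter ord_full (subsetP (round_run_subR (rounds ht))) //=.
  rewrite andbT; apply/bigcupP => -[i _]; apply/negP.
  by have [] := x_nSi i (ltn_ord i).
have [w [j [w_us jl overflow]]] :=
  round_run_overflow (rounds ht) x_us xR (fun i il => (x_nSi i il).2).
have wR : w \in Rs 1%N.
  move: w_us; rewrite mem_filter => /andP[/andP[/(subsetP (run_subR1 _))]].
  by move=> -> //; lia.
have := marg_le_singleton (u := w) (S j m.+1) v0 (v_ge0 _) v_sub.
have := u0_max wR; have [Sj_le _] := Sstar_max jl.
rewrite /marg /=; lra.
Qed.

Lemma run_early_thresholds_le :
  (alpha - 1) * \sum_(1 <= t < m.+1) v [set u0] * alpha ^+ t.-1 <= v Sstar.
Proof.
rewrite geometric_sum; case: m run_penultimate_threshold => [_|n lt].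
  by rewrite expr0 subrr mulr0.
by rewrite mulrBr mulr1 ltW // lt.
Qed.

Lemma run_row_sum_le i : (i < ell)%N ->
  \sum_(1 <= t < m.+3) v (S i t)
    <= \sum_(1 <= t < m.+1) v [set u0] * alpha ^+ t.-1 + 2 * v Sstar.
Proof.
move=> il; have [le1 le2] := Sstar_max il.
rewrite big_nat_recr //= big_nat_recr //=.
have : \sum_(1 <= t < m.+1) v (S i t)
         <= \sum_(1 <= t < m.+1) v [set u0] * alpha ^+ t.-1.
  by apply: ler_sum_nat => t ht; apply: run_le_threshold; lia.
lra.
Qed.

End Run.

Lemma approx_factor_le (F : realFieldType) (a H V : F) :
  1 < a -> (a - 1) * H <= V -> 2 * (H + 2 * V) <= (4 * a - 2) / (a - 1) * V.
Proof.
move=> a_gt1 aH_le; have a1_gt0 : 0 < a - 1 by rewrite subr_gt0.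
have -> : (4 * a - 2) / (a - 1) * V = 4 * V + 2 * V / (a - 1).
  by field; rewrite lt0r_neq0.
suff : 2 * H <= 2 * V / (a - 1) by lra.
by rewrite ler_pdivlMr //; lra.
Qed.

Theorem lemma5p3 (T : finType) (F : realFieldType) (v : {set T} -> F) (c : T -> F)
  (B alpha : F) (ell : nat) (ord : seq T) (M : nat)
  (S : nat -> nat -> {set T}) (Sstar : {set T}) :
  v set0 = 0 ->
  (forall A, 0 <= v A) ->
  submodular v ->
  (forall u, 0 <= c u) ->
  0 < B -> 1 < alpha -> (ell == 1)%N || (ell == 2)%N ->
  uniq ord -> (forall u, u \in ord) ->
  BFM_VM_run ord v c B alpha ell M S Sstar ->
  \sum_(i < ell) \sum_(1 <= t < M.+1) v (S i t)
    <= (4 * alpha - 2) / (alpha - 1) * v Sstar.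
Proof.
move=> v0 v_ge0 v_sub _ _ alpha_gt1 ell12 _ ord_full
  [Rs [p [u0 [_ [[_ u0_max] [[S0_1 Si_1]
    [[M_ge2 rounds] [[continued _] [_ Sstar_max]]]]]]]]].
case: M M_ge2 rounds continued Sstar_max => [|[|m]] // _ rounds continued Sstar_max.
pose H := \sum_(1 <= t < m.+1) v [set u0] * alpha ^+ t.-1.
have row i : (i < ell)%N -> \sum_(1 <= t < m.+3) v (S i t) <= H + 2 * v Sstar.
  exact: run_row_sum_le v0 v_ge0 alpha_gt1 S0_1 Si_1 rounds Sstar_max i.
have early : (alpha - 1) * H <= v Sstar.
  exact: run_early_thresholds_le v0 v_ge0 v_sub alpha_gt1 ord_full u0_max
    rounds continued Sstar_max.
apply: (le_trans _ (approx_factor_le alpha_gt1 early)).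
apply: le_trans (ler_sum _ (fun (i : 'I_ell) _ => row i (ltn_ord i))) _.
have H_ge0 : 0 <= H.
  apply: sumr_ge0 => t _.
  by rewrite mulr_ge0 ?exprn_ge0 ?v_ge0 ?ltW ?(lt_trans ltr01).
rewrite sumr_const card_ord; have := v_ge0 Sstar.
by case/orP: ell12 => /eqP ->; rewrite ?mulr1n ?mulr2n; lra.
Qed.
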